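(* Let $r\in\mathbb Z_+$ be even and $\Gamma=\Gamma_{(r,r)}$. If $E\in(-4,4)\setminus\mathcal C_\Gamma$, then $E\in\operatorname{int}B_j^\Gamma$ for some $j$.
   Context: For $r\ge3$ and $\theta\in\mathbb R$, $\Delta_\theta^r\in\mathbb C^{r\times r}$ is the Hermitian matrix with $1$ on the sub- and superdiagonals, $0$ on the diagonal, entry $e^{-i\theta}$ in position $(1,r)$ and $e^{i\theta}$ in position $(r,1)$, all other entries $0$; $\Delta_\theta^2=\begin{bmatrix}0&1+e^{-i\theta}\\1+e^{i\theta}&0\end{bmatrix}$. $\Gamma=\Gamma_{(r,r)}=([0,r)\times[0,r))\cap\mathbb Z^2$, $\Delta^\Gamma_{\theta,\varphi}=\Delta_\theta^r\otimes I_r+I_r\otimes\Delta_\varphi^r$, with eigenvalues $\lambda_1^\Gamma(\theta,\varphi)\le\cdots\le\lambda_{r^2}^\Gamma(\theta,\varphi)$ counted with multiplicity, and bands $B_j^\Gamma=\{\lambda_j^\Gamma(\theta,\varphi):(\theta,\varphi)\in[0,\pi]^2\}$. $\mathcal C_r=\{2\cos(\pi j/r): j\in\mathbb Z,\ 0\le j\le r\}$ and $\mathcal C_\Gamma=\mathcal C_r+\mathcal C_r=\{a+b:a,b\in\mathcal C_r\}$ (the exceptional energies). *)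

From Stdlib Require Import Reals Lra Lia Arith List Sorted.
Open Scope R_scope.

Definition C : Type := (R * R)%type.
Definition C0 : C := (0, 0).
Definition C1 : C := (1, 0).
Definition RtoC (x : R) : C := (x, 0).
Definition Cadd (z w : C) : C := (fst z + fst w, snd z + snd w).
Definition Cmul (z w : C) : C :=
  (fst z * fst w - snd z * snd w, fst z * snd w + snd z * fst w).
Definition Cconj (z : C) : C := (fst z, - snd z).
Definition Cexpi (t : R) : C := (cos t, sin t).

Fixpoint Csum (n : nat) (f : nat -> C) : C :=
  match n with
  | O => C0
  | S m => Cadd (Csum m f) (f m)
  end.

(* Matrices of size n are functions nat -> nat -> C, indices 0..n-1 (0-based);
   vectors are functions nat -> C. *)
Definition matvec (n : nat) (M : nat -> nat -> C) (v : nat -> C) (i : nat) : C :=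
  Csum n (fun k => Cmul (M i k) (v k)).
Definition cinner (n : nat) (u v : nat -> C) : C :=
  Csum n (fun k => Cmul (Cconj (u k)) (v k)).

(* Delta_theta^r, 0-based indices: paper position (1,r) is (0,r-1). *)
Definition Delta (r : nat) (theta : R) (i j : nat) : C :=
  if Nat.eqb r 2 then
    (if andb (Nat.eqb i 0) (Nat.eqb j 1) then Cadd C1 (Cexpi (- theta))
     else if andb (Nat.eqb i 1) (Nat.eqb j 0) then Cadd C1 (Cexpi theta)
     else C0)
  else
    (if andb (Nat.eqb i 0) (Nat.eqb j (r - 1)) then Cexpi (- theta)
     else if andb (Nat.eqb i (r - 1)) (Nat.eqb j 0) then Cexpi theta
     else if orb (Nat.eqb (i + 1) j) (Nat.eqb (j + 1) i) then C1
     else C0).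

(* Delta^Gamma_{theta,phi} = Delta_theta^r (x) I_r + I_r (x) Delta_phi^r,
   with Kronecker index (a,b) |-> a*r + b. *)
Definition DeltaGamma (r : nat) (theta phi : R) (p q : nat) : C :=
  let a := (p / r)%nat in let b := (p mod r)%nat in
  let c := (q / r)%nat in let d := (q mod r)%nat in
  Cadd (if Nat.eqb b d then Delta r theta a c else C0)
       (if Nat.eqb a c then Delta r phi b d else C0).

(* l (a list of n reals) is the list of eigenvalues, counted with multiplicity,
   of the (Hermitian) n x n matrix M: there is an orthonormal basis of C^n
   consisting of eigenvectors vs i with eigenvalue nth i l. *)
Definition spectrum (n : nat) (M : nat -> nat -> C) (l : list R) : Prop :=
  length l = n /\
  exists vs : nat -> nat -> C,
    (forall i j, (i < n)%nat -> (j < n)%nat ->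
        cinner n (vs i) (vs j) = (if Nat.eqb i j then C1 else C0)) /\
    (forall i k, (i < n)%nat -> (k < n)%nat ->
        matvec n M (vs i) k = Cmul (RtoC (nth i l 0)) (vs i k)).

(* band r j E : E = lambda_{j+1}^Gamma(theta,phi) for some (theta,phi) in [0,pi]^2
   (j is 0-based: j = 0 is the smallest eigenvalue). *)
Definition band (r j : nat) (E : R) : Prop :=
  exists theta phi, 0 <= theta <= PI /\ 0 <= phi <= PI /\
    exists l, Sorted Rle l /\ spectrum (r * r) (DeltaGamma r theta phi) l /\
              nth j l 0 = E.

Definition in_interior (S : R -> Prop) (x : R) : Prop :=
  exists eps, 0 < eps /\ forall y, Rabs (y - x) < eps -> S y.

Definition in_Cr (r : nat) (x : R) : Prop :=
  exists j : nat, (j <= r)%nat /\ x = 2 * cos (PI * INR j / INR r).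

Definition in_CGamma (r : nat) (x : R) : Prop :=
  exists a b, in_Cr r a /\ in_Cr r b /\ x = a + b.

From Stdlib Require Import Reals Lra Lia List Sorted Permutation Orders Mergesort.
Open Scope R_scope.

(* Delta^Gamma_{theta,phi} is the Kronecker sum of Delta^r_theta and Delta^r_phi,
   and the plane waves a |-> e^{i a (theta + 2 pi k)/r} diagonalise Delta^r_theta with eigenvalues
   2 cos((theta + 2 pi k)/r); so the spectrum of Delta^Gamma_{theta,phi} consists of the sums of
   two such cosines.  On the edge phi = 0 of [0,pi]^2 the spectra at the corners theta = 0 and
   theta = pi consist of exceptional energies, so there the number of eigenvalues below y is
   constant for y near E.  For r even the reflections k |-> -k and k |-> -1-k pair up the cosines,
   with the fixed points 2 and -2 at theta = 0 and none at theta = pi; this makes that number odd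
   at theta = 0 and even at theta = pi.  As the eigenvalues move continuously with theta, for
   every y near E some eigenvalue of index min(N_0, N_pi) equals y somewhere on the edge. *)

(* Identities of complex numbers checked componentwise; complex subterms other than the
   arithmetic operations are treated as atoms. *)
Ltac Cring :=
  unfold Cadd, Cmul, Cconj, RtoC, C0, C1; simpl;
  repeat match goal with
         | |- context [fst ?z] => lazymatch z with (_, _) => fail | _ => destruct z end
         end;
  simpl; f_equal; ring.

Lemma Cadd_0_l z : Cadd C0 z = z. Proof. Cring. Qed.
Lemma Cadd_0_r z : Cadd z C0 = z. Proof. Cring. Qed.
Lemma Cadd_comm z w : Cadd z w = Cadd w z. Proof. Cring. Qed.
Lemma Cmul_0_l z : Cmul C0 z = C0. Proof. Cring. Qed.
Lemma Cmul_0_r z : Cmul z C0 = C0. Proof. Cring. Qed.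
Lemma Cmul_1_l z : Cmul C1 z = z. Proof. Cring. Qed.
Lemma Cmul_add_l z w v : Cmul (Cadd z w) v = Cadd (Cmul z v) (Cmul w v). Proof. Cring. Qed.
Lemma Cmul_add_r z w v : Cmul v (Cadd z w) = Cadd (Cmul v z) (Cmul v w). Proof. Cring. Qed.

Lemma Cexpi_add a b : Cmul (Cexpi a) (Cexpi b) = Cexpi (a + b).
Proof. unfold Cmul, Cexpi; simpl. rewrite cos_plus, sin_plus. f_equal; ring. Qed.

Lemma Cconj_expi a : Cconj (Cexpi a) = Cexpi (- a).
Proof. unfold Cconj, Cexpi; simpl. now rewrite cos_neg, sin_neg. Qed.

Lemma Cexpi_0 : Cexpi 0 = C1.
Proof. unfold Cexpi, C1. now rewrite cos_0, sin_0. Qed.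

Lemma Cexpi_period x k : Cexpi (x + 2 * INR k * PI) = Cexpi x.
Proof. unfold Cexpi. now rewrite cos_period, sin_period. Qed.

Lemma Cexpi_eq_mod x y k : x = y + 2 * INR k * PI \/ y = x + 2 * INR k * PI -> Cexpi x = Cexpi y.
Proof. intros [-> | ->]; [|symmetry]; apply Cexpi_period. Qed.

Lemma RtoC_2cos_mul_expi a x :
  Cmul (RtoC (2 * cos a)) (Cexpi x) = Cadd (Cexpi (x + a)) (Cexpi (x - a)).
Proof.
  unfold Cmul, RtoC, Cadd, Cexpi; simpl.
  rewrite cos_plus, sin_plus, cos_minus, sin_minus. f_equal; ring.
Qed.

Lemma Csum_ext n f g : (forall i, (i < n)%nat -> f i = g i) -> Csum n f = Csum n g.
Proof. induction n; intros H; simpl; auto. rewrite IHn, H; auto. Qed.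

Lemma Csum_add n f g : Csum n (fun i => Cadd (f i) (g i)) = Cadd (Csum n f) (Csum n g).
Proof. induction n; simpl; [Cring|]. rewrite IHn. Cring. Qed.

Lemma Csum_mul_l n f z : Csum n (fun i => Cmul z (f i)) = Cmul z (Csum n f).
Proof. induction n; simpl; [Cring|]. rewrite IHn. Cring. Qed.

Lemma Csum_mul_r n f z : Csum n (fun i => Cmul (f i) z) = Cmul (Csum n f) z.
Proof. induction n; simpl; [Cring|]. rewrite IHn. Cring. Qed.

Lemma Csum_const_C1 n : Csum n (fun _ => C1) = RtoC (INR n).
Proof. induction n; [reflexivity|]. cbn [Csum]. rewrite IHn, S_INR. Cring. Qed.

Lemma Csum_app m n f : Csum (m + n) f = Cadd (Csum m f) (Csum n (fun i => f (m + i)%nat)).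
Proof.
  induction n; simpl.
  - now rewrite Nat.add_0_r, Cadd_0_r.
  - rewrite Nat.add_succ_r; simpl. rewrite IHn. Cring.
Qed.

Lemma Csum_zero n f : (forall i, (i < n)%nat -> f i = C0) -> Csum n f = C0.
Proof. induction n; intros H; simpl; auto. rewrite IHn, H; auto. apply Cadd_0_r. Qed.

Lemma Csum_single n c f : (c < n)%nat ->
  (forall i, (i < n)%nat -> i <> c -> f i = C0) -> Csum n f = f c.
Proof.
  induction n; intros Hc H; [lia|]. simpl. destruct (Nat.eq_dec n c) as [-> | Hnc].
  - rewrite Csum_zero; [apply Cadd_0_l|]. intros i Hi. apply H; lia.
  - rewrite IHn, (H n); auto; try lia. apply Cadd_0_r.
Qed.

Lemma Csum_two n c1 c2 f : (c1 < n)%nat -> (c2 < n)%nat -> c1 <> c2 ->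
  (forall i, (i < n)%nat -> i <> c1 -> i <> c2 -> f i = C0) -> Csum n f = Cadd (f c1) (f c2).
Proof.
  intros H1 H2 H12 H.
  rewrite (Csum_ext n f (fun i => Cadd (if Nat.eqb i c1 then f i else C0)
                                        (if Nat.eqb i c2 then f i else C0))).
  - rewrite Csum_add, (Csum_single n c1), (Csum_single n c2), !Nat.eqb_refl; auto;
      intros i _ Hi; apply Nat.eqb_neq in Hi; now rewrite Hi.
  - intros i Hi. destruct (Nat.eqb_spec i c1), (Nat.eqb_spec i c2); subst; try lia.
    + now rewrite Cadd_0_r.
    + now rewrite Cadd_0_l.
    + rewrite H by auto. now rewrite Cadd_0_l.
Qed.

Definition wave (x : R) (a : nat) : C := Cexpi (INR a * x).

Ltac Delta_entry := unfold Delta;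
  repeat match goal with |- context [Nat.eqb ?x ?y] => destruct (Nat.eqb_spec x y) end;
  simpl; try lia; reflexivity.

Ltac Delta_off_row :=
  intros; match goal with |- Cmul _ ?w = C0 => rewrite <- (Cmul_0_l w) end; f_equal; Delta_entry.

Ltac expi_mod k := apply (Cexpi_eq_mod _ _ k); (left; lra) || (right; lra).

(* r x = theta (mod 2 pi) makes the wave theta-quasi-periodic, which is what the corner
   entries of Delta^r_theta require. *)
Lemma matvec_Delta_wave r th x k a : (2 <= r)%nat -> (a < r)%nat ->
  INR r * x = th + 2 * INR k * PI ->
  matvec r (Delta r th) (wave x) a = Cmul (RtoC (2 * cos x)) (wave x a).
Proof.
  intros Hr Ha Hx. unfold matvec, wave at 2. rewrite RtoC_2cos_mul_expi.
  destruct (Nat.eq_dec r 2) as [-> | Hr2].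
  - simpl in Hx. destruct a as [|[|a]]; [| |lia]; simpl INR.
    + rewrite (Csum_single 2 1); [|lia|Delta_off_row].
      replace (Delta 2 th 0 1) with (Cadd C1 (Cexpi (- th))) by Delta_entry.
      unfold wave; simpl INR. rewrite Cmul_add_l, Cmul_1_l, Cexpi_add.
      f_equal; [f_equal; lra | expi_mod k].
    + rewrite (Csum_single 2 0); [|lia|Delta_off_row].
      replace (Delta 2 th 1 0) with (Cadd C1 (Cexpi th)) by Delta_entry.
      unfold wave; simpl INR. rewrite Cmul_add_l, Cmul_1_l, Cexpi_add, Cadd_comm.
      f_equal; [expi_mod k | f_equal; lra].
  - assert (Hm1 : INR (r - 1) = INR r - 1) by (rewrite minus_INR by lia; reflexivity).
    assert (Hm2 : INR (r - 2) = INR r - 2) by (rewrite minus_INR by lia; simpl; lra).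
    destruct (Nat.eq_dec a 0) as [-> | Ha0]; [|destruct (Nat.eq_dec a (r - 1)) as [-> | Har]].
    + rewrite (Csum_two r 1 (r - 1)); [| lia | lia | lia | Delta_off_row].
      replace (Delta r th 0 1) with C1 by Delta_entry.
      replace (Delta r th 0 (r - 1)) with (Cexpi (- th)) by Delta_entry.
      unfold wave. rewrite Cmul_1_l, Cexpi_add, Hm1. simpl INR.
      f_equal; [f_equal; lra | expi_mod k].
    + rewrite (Csum_two r (r - 2) 0); [| lia | lia | lia | Delta_off_row].
      replace (Delta r th (r - 1) (r - 2)) with C1 by Delta_entry.
      replace (Delta r th (r - 1) 0) with (Cexpi th) by Delta_entry.
      unfold wave. rewrite Cmul_1_l, Cexpi_add, Hm1, Hm2, Cadd_comm. simpl INR.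
      f_equal; [expi_mod k | f_equal; lra].
    + rewrite (Csum_two r (a - 1) (a + 1)); [| lia | lia | lia | Delta_off_row].
      replace (Delta r th a (a - 1)) with C1 by Delta_entry.
      replace (Delta r th a (a + 1)) with C1 by Delta_entry.
      unfold wave. rewrite !Cmul_1_l, minus_INR, plus_INR, Cadd_comm by lia. simpl INR.
      f_equal; f_equal; lra.
Qed.

Lemma Cmul_eq_0 z w : Cmul z w = C0 -> z = C0 \/ w = C0.
Proof.
  destruct z as [a b], w as [c d]. unfold Cmul, C0; simpl. intros [= H1 H2].
  destruct (Req_dec (a * a + b * b) 0) as [Hz | Hz].
  - left. destruct (Rplus_sqr_eq_0 a b Hz) as [-> ->]. reflexivity.
  - right.
    assert (Hc : (a * a + b * b) * c = a * (a * c - b * d) + b * (a * d + b * c)) by ring.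
    assert (Hd : (a * a + b * b) * d = a * (a * d + b * c) - b * (a * c - b * d)) by ring.
    rewrite H1, H2, !Rmult_0_r, Rplus_0_r in Hc. rewrite H1, H2, !Rmult_0_r, Rminus_0_r in Hd.
    apply Rmult_integral in Hc, Hd. f_equal; tauto.
Qed.

Lemma wave_geometric_sum x n :
  Cmul (Cadd (Cexpi x) (RtoC (-1))) (Csum n (wave x)) = Cadd (Cexpi (INR n * x)) (RtoC (-1)).
Proof.
  induction n; cbn [Csum].
  - simpl INR. rewrite Rmult_0_l, Cexpi_0. Cring.
  - rewrite Cmul_add_r, IHn. unfold wave. rewrite S_INR.
    replace ((INR n + 1) * x) with (x + INR n * x) by ring. rewrite <- Cexpi_add. Cring.
Qed.

Lemma cos_neq_1 x : 0 < Rabs x < 2 * PI -> cos x <> 1.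
Proof.
  intros Hx Hc.
  assert (Habs : cos (Rabs x) = 1) by (unfold Rabs; destruct Rcase_abs; now rewrite ?cos_neg).
  set (y := Rabs x) in *. clear Hc.
  assert (Hs : sin (y / 2) > 0) by (apply sin_gt_0; lra).
  replace y with (2 * (y / 2)) in Habs by field. rewrite cos_2a_sin in Habs. nra.
Qed.

Lemma wave_sum_eq_0 x n : cos x <> 1 -> Cexpi (INR n * x) = C1 -> Csum n (wave x) = C0.
Proof.
  intros Hx Hn. pose proof (wave_geometric_sum x n) as G.
  rewrite Hn in G. replace (Cadd C1 (RtoC (-1))) with C0 in G by Cring.
  destruct (Cmul_eq_0 _ _ G) as [H1 | ]; auto.
  unfold Cexpi, Cadd, C0 in H1; simpl in H1. injection H1. lra.
Qed.

Definition phase (r : nat) (th : R) (k : nat) : R := (th + 2 * INR k * PI) / INR r.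

Lemma INR_phase r th k : (0 < r)%nat -> INR r * phase r th k = th + 2 * INR k * PI.
Proof. intros Hr. unfold phase. field. apply not_0_INR. lia. Qed.

Lemma Cconj_wave_mul x y a : Cmul (Cconj (wave x a)) (wave y a) = wave (y - x) a.
Proof. unfold wave. rewrite Cconj_expi, Cexpi_add. f_equal. ring. Qed.

Lemma cinner_wave_phase r th k k' : (k < r)%nat -> (k' < r)%nat ->
  cinner r (wave (phase r th k)) (wave (phase r th k')) =
  if Nat.eqb k k' then RtoC (INR r) else C0.
Proof.
  intros Hk Hk'. unfold cinner. rewrite (Csum_ext _ _ _ (fun a _ => Cconj_wave_mul _ _ a)).
  assert (Hr : 0 < INR r) by (apply lt_0_INR; lia).
  set (x := phase r th k' - phase r th k).
  assert (Hx : INR r * x = 2 * (INR k' - INR k) * PI) by (unfold x, phase; field; lra).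
  destruct (Nat.eqb_spec k k') as [<- | Hkk].
  - replace x with 0 by (unfold x; ring).
    rewrite <- Csum_const_C1. apply Csum_ext. intros a _.
    unfold wave. now rewrite Rmult_0_r, Cexpi_0.
  - apply wave_sum_eq_0.
    + apply cos_neq_1. pose proof PI_RGT_0.
      assert (Hne : INR k <> INR k') by (intros E; apply INR_eq in E; auto).
      apply lt_INR in Hk, Hk'. pose proof (pos_INR k). pose proof (pos_INR k').
      unfold Rabs; destruct Rcase_abs; split; nra.
    + rewrite Hx, <- Cexpi_0. destruct (Nat.le_gt_cases k k').
      * apply (Cexpi_eq_mod _ _ (k' - k)). left. rewrite minus_INR by lia. ring.
      * apply (Cexpi_eq_mod _ _ (k - k')). right. rewrite minus_INR by lia. ring.
Qed.

Lemma matvec_scale n M c v i :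
  matvec n M (fun a => Cmul c (v a)) i = Cmul c (matvec n M v i).
Proof.
  unfold matvec. rewrite <- Csum_mul_l. apply Csum_ext. intros. Cring.
Qed.

Lemma cinner_scale_real n c u v :
  cinner n (fun a => Cmul (RtoC c) (u a)) (fun a => Cmul (RtoC c) (v a)) =
  Cmul (RtoC (c * c)) (cinner n u v).
Proof.
  unfold cinner. rewrite <- Csum_mul_l. apply Csum_ext. intros. Cring.
Qed.

Definition Delta_eig (r : nat) (th : R) (k : nat) : R := 2 * cos (phase r th k).

Definition Delta_vec (r : nat) (th : R) (k a : nat) : C :=
  Cmul (RtoC (/ sqrt (INR r))) (wave (phase r th k) a).

Lemma matvec_Delta_vec r th k a : (2 <= r)%nat -> (a < r)%nat ->
  matvec r (Delta r th) (Delta_vec r th k) a = Cmul (RtoC (Delta_eig r th k)) (Delta_vec r th k a).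
Proof.
  intros Hr Ha. unfold Delta_vec. rewrite matvec_scale.
  rewrite (matvec_Delta_wave r th _ k) by (auto; apply INR_phase; lia).
  unfold Delta_eig. Cring.
Qed.

Lemma cinner_Delta_vec r th k k' : (k < r)%nat -> (k' < r)%nat ->
  cinner r (Delta_vec r th k) (Delta_vec r th k') = if Nat.eqb k k' then C1 else C0.
Proof.
  intros Hk Hk'. unfold Delta_vec. rewrite cinner_scale_real, cinner_wave_phase by auto.
  assert (Hr : 0 < INR r) by (apply lt_0_INR; lia).
  rewrite <- Rinv_mult, sqrt_sqrt by lra.
  destruct (Nat.eqb k k'); unfold RtoC, Cmul, C1, C0; simpl; f_equal; field; lra.
Qed.

Definition kron (r : nat) (u v : nat -> C) (p : nat) : C := Cmul (u (p / r)%nat) (v (p mod r)%nat).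

Definition kron_sum (r : nat) (A B : nat -> nat -> C) (p q : nat) : C :=
  let a := (p / r)%nat in let b := (p mod r)%nat in
  let c := (q / r)%nat in let d := (q mod r)%nat in
  Cadd (if Nat.eqb b d then A a c else C0) (if Nat.eqb a c then B b d else C0).

Lemma DeltaGamma_kron_sum r th ph : DeltaGamma r th ph = kron_sum r (Delta r th) (Delta r ph).
Proof. reflexivity. Qed.

Lemma div_mod_pair r a b : (b < r)%nat -> ((a * r + b) / r = a /\ (a * r + b) mod r = b)%nat.
Proof.
  intros Hb. split.
  - symmetry. apply Nat.div_unique with b; lia.
  - symmetry. apply Nat.mod_unique with a; lia.
Qed.

Lemma Csum_pairs m r F : Csum (m * r) F = Csum m (fun a => Csum r (fun b => F (a * r + b)%nat)).
Proof.
  induction m; cbn [Csum]; auto.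
  replace (S m * r)%nat with (m * r + r)%nat by lia. now rewrite Csum_app, IHm.
Qed.

Lemma Csum_mul_Csum m n f g :
  Csum m (fun a => Csum n (fun b => Cmul (f a) (g b))) = Cmul (Csum m f) (Csum n g).
Proof. rewrite <- Csum_mul_r. apply Csum_ext. intros. apply Csum_mul_l. Qed.

Lemma kron_pair r u v a b : (b < r)%nat -> kron r u v (a * r + b) = Cmul (u a) (v b).
Proof. intros Hb. unfold kron. now destruct (div_mod_pair r a b Hb) as [-> ->]. Qed.

Lemma cinner_kron r u v u' v' :
  cinner (r * r) (kron r u v) (kron r u' v') = Cmul (cinner r u u') (cinner r v v').
Proof.
  unfold cinner. rewrite Csum_pairs, <- Csum_mul_Csum.
  apply Csum_ext. intros a _. apply Csum_ext. intros b Hb. rewrite !kron_pair by auto. Cring.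
Qed.

Lemma matvec_kron_sum r A B u v la lb p :
  (forall a, (a < r)%nat -> matvec r A u a = Cmul (RtoC la) (u a)) ->
  (forall b, (b < r)%nat -> matvec r B v b = Cmul (RtoC lb) (v b)) ->
  (p < r * r)%nat ->
  matvec (r * r) (kron_sum r A B) (kron r u v) p = Cmul (RtoC (la + lb)) (kron r u v p).
Proof.
  intros HA HB Hp.
  assert (Ha : (p / r < r)%nat) by (apply Nat.Div0.div_lt_upper_bound; lia).
  assert (Hb : (p mod r < r)%nat) by (apply Nat.mod_upper_bound; lia).
  set (a := (p / r)%nat) in *. set (b := (p mod r)%nat) in *.
  assert (Hsplit : matvec (r * r) (kron_sum r A B) (kron r u v) p =
    Cadd (Cmul (matvec r A u a) (v b)) (Cmul (u a) (matvec r B v b))).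
  { assert (Hentry : forall c d, (d < r)%nat ->
      Cmul (kron_sum r A B p (c * r + d)) (kron r u v (c * r + d)) =
      Cadd (if Nat.eqb b d then Cmul (Cmul (A a c) (u c)) (v d) else C0)
           (if Nat.eqb a c then Cmul (u c) (Cmul (B b d) (v d)) else C0)).
    { intros c d Hd. unfold kron_sum. rewrite kron_pair by auto.
      destruct (div_mod_pair r c d Hd) as [-> ->]. fold a b.
      destruct (Nat.eqb b d), (Nat.eqb a c); Cring. }
    unfold matvec. rewrite Csum_pairs.
    rewrite (Csum_ext _ _ _ (fun c _ => Csum_ext _ _ _ (fun d Hd => Hentry c d Hd))).
    rewrite (Csum_ext _ _ _ (fun c _ => Csum_add r _ _)), Csum_add. f_equal.
    - rewrite <- Csum_mul_r. apply Csum_ext. intros c _.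
      rewrite (Csum_single r b), Nat.eqb_refl; auto.
      intros d _ Hd. apply Nat.eqb_neq in Hd. now rewrite Nat.eqb_sym, Hd.
    - rewrite (Csum_single r a), Nat.eqb_refl, <- Csum_mul_l; auto.
      intros c _ Hc. apply Csum_zero. intros d _. apply Nat.eqb_neq in Hc.
      now rewrite Nat.eqb_sym, Hc. }
  rewrite Hsplit, HA, HB by auto. unfold kron. fold a b. Cring.
Qed.

Definition DeltaGamma_eig (r : nat) (th ph : R) (i : nat) : R :=
  Delta_eig r th (i / r) + Delta_eig r ph (i mod r).

Definition DeltaGamma_vec (r : nat) (th ph : R) (i : nat) : nat -> C :=
  kron r (Delta_vec r th (i / r)) (Delta_vec r ph (i mod r)).

Lemma matvec_DeltaGamma_vec r th ph i p : (2 <= r)%nat -> (p < r * r)%nat ->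
  matvec (r * r) (DeltaGamma r th ph) (DeltaGamma_vec r th ph i) p =
  Cmul (RtoC (DeltaGamma_eig r th ph i)) (DeltaGamma_vec r th ph i p).
Proof.
  intros Hr Hp. rewrite DeltaGamma_kron_sum.
  apply matvec_kron_sum; auto; intros; apply matvec_Delta_vec; auto.
Qed.

Lemma cinner_DeltaGamma_vec r th ph i j : (i < r * r)%nat -> (j < r * r)%nat ->
  cinner (r * r) (DeltaGamma_vec r th ph i) (DeltaGamma_vec r th ph j) =
  if Nat.eqb i j then C1 else C0.
Proof.
  intros Hi Hj. unfold DeltaGamma_vec. rewrite cinner_kron.
  assert (Hr : (0 < r)%nat) by lia.
  rewrite !cinner_Delta_vec
    by (apply Nat.Div0.div_lt_upper_bound || apply Nat.mod_upper_bound; lia).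
  destruct (Nat.eqb_spec i j) as [<- | Hij].
  - rewrite !Nat.eqb_refl. apply Cmul_1_l.
  - destruct (Nat.eqb_spec (i / r) (j / r)), (Nat.eqb_spec (i mod r) (j mod r));
      rewrite ?Cmul_0_l, ?Cmul_0_r; auto.
    exfalso. apply Hij. rewrite (Nat.div_mod_eq i r), (Nat.div_mod_eq j r). lia.
Qed.

Module KeyOrder <: TotalLeBool'.
  Definition t := (R * nat)%type.
  Definition leb (x y : t) : bool := if Rle_dec (fst x) (fst y) then true else false.
  Lemma leb_total x y : leb x y = true \/ leb y x = true.
  Proof. unfold leb. destruct (Rle_dec (fst x) (fst y)), (Rle_dec (fst y) (fst x)); auto. lra. Qed.
End KeyOrder.

Module KeySort := Sort KeyOrder.

Lemma Sorted_map_fst l : Sorted (fun x y => is_true (KeyOrder.leb x y)) l -> Sorted Rle (map fst l).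
Proof.
  induction 1 as [|x l _ IH Hx]; constructor; auto.
  destruct Hx as [|y l' Hxy]; constructor.
  unfold KeyOrder.leb, is_true in Hxy. now destruct (Rle_dec (fst x) (fst y)).
Qed.

Lemma spectrum_of_eigenbasis n M (f : nat -> R) (V : nat -> nat -> C) :
  (forall i j, (i < n)%nat -> (j < n)%nat ->
     cinner n (V i) (V j) = if Nat.eqb i j then C1 else C0) ->
  (forall i k, (i < n)%nat -> (k < n)%nat -> matvec n M (V i) k = Cmul (RtoC (f i)) (V i k)) ->
  exists l, Sorted Rle l /\ spectrum n M l /\ Permutation (map f (seq 0 n)) l.
Proof.
  intros Horth Heig.
  (* Sorting the pairs (f i, i) carries each eigenvector along with its eigenvalue. *)
  set (ls := KeySort.sort (map (fun i => (f i, i)) (seq 0 n))).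
  assert (Hperm : Permutation (map (fun i => (f i, i)) (seq 0 n)) ls)
    by apply KeySort.Permuted_sort.
  assert (Hlen : length ls = n)
    by now rewrite <- (Permutation_length Hperm), length_map, length_seq.
  assert (Hin : forall x, In x ls -> (snd x < n)%nat /\ fst x = f (snd x)).
  { intros x Hx. apply (Permutation_in _ (Permutation_sym Hperm)), in_map_iff in Hx.
    destruct Hx as [i [<- Hi]]. apply in_seq in Hi. simpl. split; [lia | reflexivity]. }
  assert (Hnodup : NoDup (map snd ls)).
  { apply (Permutation_NoDup (Permutation_map snd Hperm)).
    rewrite map_map, map_id. apply seq_NoDup. }
  set (idx i := snd (nth i ls (0, 0%nat))).
  assert (Hidx : forall i, (i < n)%nat -> (idx i < n)%nat /\ nth i (map fst ls) 0 = f (idx i)).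
  { intros i Hi. replace 0 with (fst (0, 0%nat)) by reflexivity.
    rewrite map_nth. apply Hin, nth_In. lia. }
  exists (map fst ls). split; [apply Sorted_map_fst, KeySort.Sorted_sort|]. split.
  - split; [now rewrite length_map|]. exists (fun i => V (idx i)). split.
    + intros i j Hi Hj. rewrite Horth by (apply Hidx; auto).
      destruct (Nat.eqb_spec i j) as [<- | Hij]; [now rewrite Nat.eqb_refl|].
      destruct (Nat.eqb_spec (idx i) (idx j)) as [Heq | ]; auto.
      exfalso. apply Hij. rewrite NoDup_nth in Hnodup.
      apply Hnodup; rewrite ?length_map; try lia.
      unfold idx in Heq. now rewrite !(map_nth snd ls (0, 0%nat)).
    + intros i k Hi Hk. rewrite Heig by (auto; apply Hidx; auto). now rewrite (proj2 (Hidx i Hi)).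
  - apply Permutation_map with (f := fst) in Hperm. now rewrite map_map in Hperm.
Qed.

Fixpoint count (p : R -> bool) (l : list R) : nat :=
  match l with
  | nil => 0
  | x :: l' => Nat.b2n (p x) + count p l'
  end.

Definition below (y x : R) : bool := if Rlt_dec x y then true else false.
Definition atmost (y x : R) : bool := if Rle_dec x y then true else false.

Lemma count_perm p l l' : Permutation l l' -> count p l = count p l'.
Proof. induction 1; simpl; lia. Qed.

Lemma count_app p l l' : count p (l ++ l') = (count p l + count p l')%nat.
Proof. induction l; simpl; lia. Qed.

Lemma count_le_length p l : (count p l <= length l)%nat.
Proof. induction l as [|x l IH]; simpl; auto. destruct (p x); simpl; lia. Qed.

Lemma count_below_le_atmost y l : (count (below y) l <= count (atmost y) l)%nat.
Proof.
  induction l as [|x l IH]; simpl; auto. unfold below at 1, atmost at 1.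
  destruct (Rlt_dec x y), (Rle_dec x y); simpl; (exfalso; lra) || lia.
Qed.

Lemma count_eq_0 p l : (forall x, In x l -> p x = false) -> count p l = 0%nat.
Proof.
  induction l as [|x l IH]; intros H; simpl; auto.
  rewrite H, IH; simpl; auto with datatypes.
Qed.

Lemma nth_sorted_of_count l y j : Sorted Rle l ->
  (count (below y) l <= j < count (atmost y) l)%nat -> nth j l 0 = y.
Proof.
  intros Hs. apply Sorted_StronglySorted in Hs; [|intros a b c; lra].
  revert j. induction Hs as [|x l Hs IH Hx]; intros j Hj; simpl in *; [lia|].
  rewrite Forall_forall in Hx. unfold below at 1, atmost at 1 in Hj.
  destruct (Rlt_dec x y); [destruct (Rle_dec x y); [|lra]|].
  - destruct j; [simpl in Hj; lia|]. apply IH. simpl in Hj. lia.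
  - assert (Hb : count (below y) l = 0%nat).
    { apply count_eq_0. intros z Hz. specialize (Hx z Hz). unfold below.
      destruct (Rlt_dec z y); auto; lra. }
    destruct (Rle_dec x y) as [Hxy | Hxy].
    + destruct j; [simpl; lra|]. apply IH. simpl in Hj. lia.
    + rewrite (count_eq_0 (atmost y)) in Hj; [simpl in Hj; lia|].
      intros z Hz. specialize (Hx z Hz). unfold atmost. destruct (Rle_dec z y); auto; lra.
Qed.

Definition spec_list (r : nat) (th ph : R) : list R := map (DeltaGamma_eig r th ph) (seq 0 (r * r)).

Lemma count_spec_list_le r th ph p : (count p (spec_list r th ph) <= r * r)%nat.
Proof.
  eapply Nat.le_trans; [apply count_le_length|]. unfold spec_list.
  now rewrite length_map, length_seq.
Qed.

Lemma band_of_counts r j th ph y : (2 <= r)%nat -> 0 <= th <= PI -> 0 <= ph <= PI ->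
  (count (below y) (spec_list r th ph) <= j < count (atmost y) (spec_list r th ph))%nat ->
  band r j y.
Proof.
  intros Hr Hth Hph Hj.
  destruct (spectrum_of_eigenbasis (r * r) (DeltaGamma r th ph) (DeltaGamma_eig r th ph)
              (DeltaGamma_vec r th ph)) as [l [Hs [Hspec Hperm]]].
  - apply cinner_DeltaGamma_vec.
  - intros; apply matvec_DeltaGamma_vec; auto.
  - exists th, ph. do 2 (split; auto). exists l. do 2 (split; auto).
    apply nth_sorted_of_count; auto. now rewrite <- !(count_perm _ _ _ Hperm).
Qed.

Lemma continuity_pt_below f t0 y : continuity_pt f t0 -> f t0 < y ->
  exists d, 0 < d /\ forall t, Rabs (t - t0) < d -> f t < y.
Proof.
  intros Hf Hy. destruct (Hf (y - f t0)) as [d [Hd Ht]]; [lra|].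
  exists d. split; auto. intros t Htd. destruct (Req_dec t t0) as [-> | Hne]; auto.
  assert (H : R_dist (f t) (f t0) < y - f t0).
  { apply Ht. split; [split; [exact I | congruence] | exact Htd]. }
  unfold R_dist in H. apply Rabs_def2 in H. lra.
Qed.

Lemma continuity_pt_above f t0 y : continuity_pt f t0 -> y < f t0 ->
  exists d, 0 < d /\ forall t, Rabs (t - t0) < d -> y < f t.
Proof.
  intros Hf Hy. destruct (continuity_pt_below (fun t => - f t) t0 (- y)) as [d [Hd Ht]].
  - now apply continuity_pt_opp.
  - lra.
  - exists d. split; auto. intros t Htd. specialize (Ht t Htd). lra.
Qed.

Lemma count_locally_constant l E : (forall x, In x l -> x <> E) ->
  exists eps, 0 < eps /\ forall y, Rabs (y - E) < eps ->
    count (below y) l = count (below E) l /\ count (atmost y) l = count (below E) l.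
Proof.
  induction l as [|x l IH]; intros Hl.
  - exists 1. split; [lra|]. auto.
  - destruct IH as [eps [Heps H]]; [intros; apply Hl; now right|].
    assert (Hx : x <> E) by (apply Hl; now left).
    exists (Rmin eps (Rabs (x - E))). split.
    { apply Rmin_glb_lt; auto. apply Rabs_pos_lt. lra. }
    intros y Hy.
    assert (Hy1 : Rabs (y - E) < eps) by (eapply Rlt_le_trans; [exact Hy | apply Rmin_l]).
    assert (Hy2 : Rabs (y - E) < Rabs (x - E)) by (eapply Rlt_le_trans; [exact Hy | apply Rmin_r]).
    simpl. destruct (H y Hy1) as [-> ->]. unfold below, atmost.
    apply Rabs_def2 in Hy1. unfold Rabs in Hy2. destruct (Rcase_abs (x - E)), (Rcase_abs (y - E));
      destruct (Rlt_dec x y), (Rlt_dec x E), (Rle_dec x y); split; auto; exfalso; lra.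
Qed.

Section CountCrossing.

Variable G : R -> nat -> R.
Hypothesis G_continuous : forall i, continuity (fun t => G t i).

Lemma count_semicontinuous (s : list nat) y t0 : exists d, 0 < d /\ forall t, Rabs (t - t0) < d ->
  (count (below y) (map (G t0) s) <= count (below y) (map (G t) s) /\
   count (atmost y) (map (G t) s) <= count (atmost y) (map (G t0) s))%nat.
Proof.
  induction s as [|i s IH]; [exists 1; split; [lra | simpl; lia]|].
  destruct IH as [d1 [Hd1 H1]].
  assert (Hi : exists d2, 0 < d2 /\ forall t, Rabs (t - t0) < d2 ->
             (G t0 i < y -> G t i < y) /\ (y < G t0 i -> y < G t i)).
  { destruct (Rtotal_order (G t0 i) y) as [Hlt | [Heq | Hgt]].
    - destruct (continuity_pt_below _ _ _ (G_continuous i t0) Hlt) as [d [Hd Ht]].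
      exists d. split; auto. intros t Htd. split; intros; [auto | lra].
    - exists 1. split; [lra|]. intros; split; intros; lra.
    - destruct (continuity_pt_above _ _ _ (G_continuous i t0) Hgt) as [d [Hd Ht]].
      exists d. split; auto. intros t Htd. split; intros; [lra | auto]. }
  destruct Hi as [d2 [Hd2 H2]].
  exists (Rmin d1 d2). split; [now apply Rmin_glb_lt|]. intros t Ht.
  destruct (H1 t) as [A B]; [eapply Rlt_le_trans; [exact Ht | apply Rmin_l]|].
  destruct (H2 t) as [Hlt Hgt]; [eapply Rlt_le_trans; [exact Ht | apply Rmin_r]|].
  simpl. unfold below at 1 3, atmost at 1 3.
  destruct (Rlt_dec (G t0 i) y), (Rlt_dec (G t i) y), (Rle_dec (G t i) y), (Rle_dec (G t0 i) y);
    simpl; lia || (exfalso; lra).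
Qed.

Lemma count_ivt (s : list nat) y j a b : a <= b ->
  (count (atmost y) (map (G a) s) <= j < count (below y) (map (G b) s))%nat ->
  exists t, a <= t <= b /\
    (count (below y) (map (G t) s) <= j < count (atmost y) (map (G t) s))%nat.
Proof.
  intros Hab [Ha Hb].
  (* The crossing point is the supremum of the parameters at which at most j values lie at or
     below y. *)
  set (Low := fun t => a <= t <= b /\ (count (atmost y) (map (G t) s) <= j)%nat).
  destruct (completeness Low) as [m [Hub Hlub]].
  { exists b. intros x [Hx _]. lra. }
  { exists a. split; auto. lra. }
  assert (Ham : a <= m) by (apply Hub; split; auto; lra).
  assert (Hmb : m <= b) by (apply Hlub; intros x [Hx _]; lra).
  destruct (count_semicontinuous s y m) as [d [Hd Hs]].
  exists m. split; [lra|]. split.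
  - destruct (Nat.le_gt_cases (count (below y) (map (G m) s)) j) as [|Hgt]; auto. exfalso.
    assert (m <= m - d / 2); [|lra].
    apply Hlub. intros x [Hx Hxj]. destruct (Rle_dec x (m - d / 2)) as [|Hfar]; auto.
    assert (x <= m) by (apply Hub; split; auto).
    destruct (Hs x) as [A _]; [rewrite Rabs_left1; lra|].
    pose proof (count_below_le_atmost y (map (G x) s)). lia.
  - destruct (Nat.le_gt_cases (count (atmost y) (map (G m) s)) j) as [Hle|]; auto. exfalso.
    destruct (Req_dec m b) as [-> | Hmb'].
    + pose proof (count_below_le_atmost y (map (G b) s)). lia.
    + set (t := Rmin (m + d / 2) b).
      assert (m < t) by (apply Rmin_glb_lt; lra).
      assert (t <= m + d / 2) by apply Rmin_l. assert (t <= b) by apply Rmin_r.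
      assert (Hlow : Low t); [|specialize (Hub t Hlow); lra].
      split; [lra|]. destruct (Hs t) as [_ B]; [rewrite Rabs_pos_eq; lra | lia].
Qed.

End CountCrossing.

Lemma count_crossing (G : R -> nat -> R) (s : list nat) y j a b :
  (forall i, continuity (fun t => G t i)) -> a <= b ->
  (count (atmost y) (map (G a) s) <= j < count (below y) (map (G b) s) \/
   count (atmost y) (map (G b) s) <= j < count (below y) (map (G a) s))%nat ->
  exists t, a <= t <= b /\
    (count (below y) (map (G t) s) <= j < count (atmost y) (map (G t) s))%nat.
Proof.
  intros HG Hab [Hj | Hj]; [now apply count_ivt|].
  assert (HG' : forall i, continuity (fun t => G (a + b - t) i)).
  { intros i. apply (continuity_comp (fun t => a + b - t) (fun u => G u i)); [reg | apply HG]. }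
  destruct (count_ivt (fun t => G (a + b - t)) HG' s y j a b Hab) as [t [Ht Hc]].
  - replace (a + b - a) with b by ring. replace (a + b - b) with a by ring. exact Hj.
  - exists (a + b - t). split; [lra | exact Hc].
Qed.

Fixpoint nsum (n : nat) (f : nat -> nat) : nat :=
  match n with
  | O => O
  | S m => (nsum m f + f m)%nat
  end.

Lemma nsum_ext n f g : (forall i, (i < n)%nat -> f i = g i) -> nsum n f = nsum n g.
Proof. induction n; intros H; simpl; auto. rewrite IHn, H; auto. Qed.

Lemma nsum_app m n f : nsum (m + n) f = (nsum m f + nsum n (fun i => f (m + i)))%nat.
Proof.
  induction n; simpl; [now rewrite Nat.add_0_r|].
  rewrite Nat.add_succ_r. simpl. rewrite IHn. lia.
Qed.

Lemma nsum_shift n f : nsum (S n) f = (f O + nsum n (fun i => f (S i)))%nat.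
Proof. induction n; simpl in *; lia. Qed.

Lemma nsum_rev n f : nsum n f = nsum n (fun i => f (n - 1 - i)%nat).
Proof.
  induction n; [reflexivity|].
  rewrite (nsum_shift n (fun i => f (S n - 1 - i)%nat)).
  change (nsum (S n) f) with (nsum n f + f n)%nat. rewrite IHn.
  replace (S n - 1 - 0)%nat with n by lia.
  rewrite (nsum_ext n (fun i => f (S n - 1 - S i)%nat) (fun i => f (n - 1 - i)%nat));
    [lia | intros; f_equal; lia].
Qed.

Lemma nsum_add n f g : nsum n (fun i => f i + g i)%nat = (nsum n f + nsum n g)%nat.
Proof. induction n; simpl; auto. rewrite IHn. lia. Qed.

Lemma nsum_const n f c : (forall i, (i < n)%nat -> f i = c) -> nsum n f = (n * c)%nat.
Proof. induction n; intros H; simpl; auto. rewrite IHn, H; auto. lia. Qed.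

Lemma nsum_pairs m r f : nsum (m * r) f = nsum m (fun a => nsum r (fun b => f (a * r + b)%nat)).
Proof.
  induction m; simpl; auto. replace (r + m * r)%nat with (m * r + r)%nat by lia.
  now rewrite nsum_app, IHm.
Qed.

Lemma count_map_seq p g n : count p (map g (seq 0 n)) = nsum n (fun i => Nat.b2n (p (g i))).
Proof.
  induction n; auto. rewrite seq_S, map_app, count_app, IHn. simpl. lia.
Qed.

Lemma nsum_reflect_even m h : (forall k, (k < 2 * m)%nat -> h k = h (2 * m - 1 - k)%nat) ->
  Nat.Even (nsum (2 * m) h).
Proof.
  intros H. exists (nsum m h). replace (2 * m)%nat with (m + m)%nat by lia. rewrite nsum_app.
  rewrite (nsum_ext m (fun i => h (m + i)%nat) (fun i => h (m - 1 - i)%nat)).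
  - rewrite <- nsum_rev. lia.
  - intros i Hi. rewrite H by lia. f_equal. lia.
Qed.

Lemma nsum_reflect_fixed m h : (1 <= m)%nat ->
  (forall l, (1 <= l < 2 * m)%nat -> h l = h (2 * m - l)%nat) ->
  exists q, nsum (2 * m) h = (h O + h m + 2 * q)%nat.
Proof.
  intros Hm H. destruct m as [|m]; [lia|]. exists (nsum m (fun i => h (S i))).
  replace (2 * S m)%nat with (S m + S m)%nat by lia.
  rewrite nsum_app, nsum_shift, (nsum_shift m (fun i => h (S m + i)%nat)).
  rewrite (nsum_ext m (fun i => h (S m + S i)%nat) (fun i => h (S (m - 1 - i)))).
  - rewrite <- (nsum_rev m (fun i => h (S i))), Nat.add_0_r. lia.
  - intros i Hi. rewrite H by lia. f_equal. lia.
Qed.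

Lemma Delta_eig_bound r th k : -2 <= Delta_eig r th k <= 2.
Proof. unfold Delta_eig. pose proof (COS_bound (phase r th k)). lra. Qed.

Lemma cos_2PI_minus x : cos (2 * PI - x) = cos x.
Proof. rewrite cos_minus, cos_2PI, sin_2PI. ring. Qed.

Lemma Delta_eig_0_reflect r l : (0 < r)%nat -> (l <= r)%nat ->
  Delta_eig r 0 (r - l) = Delta_eig r 0 l.
Proof.
  intros Hr Hl. assert (0 < INR r) by (apply lt_0_INR; lia).
  unfold Delta_eig, phase. rewrite minus_INR, <- cos_2PI_minus by auto. do 2 f_equal. field. lra.
Qed.

Lemma Delta_eig_PI_reflect r k : (k < r)%nat -> Delta_eig r PI (r - 1 - k) = Delta_eig r PI k.
Proof.
  intros Hk. assert (0 < INR r) by (apply lt_0_INR; lia).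
  unfold Delta_eig, phase. rewrite !minus_INR, <- cos_2PI_minus by lia. simpl INR.
  do 2 f_equal. field. lra.
Qed.

Lemma Delta_eig_0_0 r : (0 < r)%nat -> Delta_eig r 0 0 = 2.
Proof.
  intros Hr. unfold Delta_eig, phase. simpl INR.
  replace ((0 + 2 * 0 * PI) / INR r) with 0 by (field; apply not_0_INR; lia).
  rewrite cos_0. ring.
Qed.

Lemma Delta_eig_0_half m : (0 < m)%nat -> Delta_eig (2 * m) 0 m = -2.
Proof.
  intros Hm. unfold Delta_eig, phase. rewrite mult_INR. simpl INR.
  replace ((0 + 2 * INR m * PI) / ((1 + 1) * INR m)) with PI by (field; apply not_0_INR; lia).
  rewrite cos_PI. ring.
Qed.

Lemma nsum_congr_mod2 n A B : (forall k, (k < n)%nat -> exists q, A k = (B k + 2 * q)%nat) ->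
  exists q, nsum n A = (nsum n B + 2 * q)%nat.
Proof.
  induction n; intros H; [now exists O|].
  destruct IHn as [q1 H1]; [intros; apply H; lia|]. destruct (H n) as [q2 H2]; [lia|].
  exists (q1 + q2)%nat. simpl. lia.
Qed.

Lemma nsum_below_add_Delta_eig_0 m x y : (1 <= m)%nat ->
  exists q, nsum (2 * m) (fun l => Nat.b2n (below y (x + Delta_eig (2 * m) 0 l))) =
            (Nat.b2n (below (y - 2) x) + Nat.b2n (below (y + 2) x) + 2 * q)%nat.
Proof.
  intros Hm.
  destruct (nsum_reflect_fixed m (fun l => Nat.b2n (below y (x + Delta_eig (2 * m) 0 l))))
    as [q Hq]; auto.
  - intros l Hl. now rewrite Delta_eig_0_reflect by lia.
  - exists q. rewrite Hq, Delta_eig_0_0, Delta_eig_0_half by lia. unfold below.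
    destruct (Rlt_dec (x + 2) y), (Rlt_dec x (y - 2)), (Rlt_dec (x + -2) y), (Rlt_dec x (y + 2));
      simpl; lia || (exfalso; lra).
Qed.

Lemma count_below_spec_list_mod2 m t y : (1 <= m)%nat ->
  exists q, count (below y) (spec_list (2 * m) t 0) =
    (nsum (2 * m) (fun k => Nat.b2n (below (y - 2) (Delta_eig (2 * m) t k))) +
     nsum (2 * m) (fun k => Nat.b2n (below (y + 2) (Delta_eig (2 * m) t k))) + 2 * q)%nat.
Proof.
  intros Hm. unfold spec_list. rewrite count_map_seq, nsum_pairs, <- nsum_add.
  apply nsum_congr_mod2. intros k _.
  destruct (nsum_below_add_Delta_eig_0 m (Delta_eig (2 * m) t k) y Hm) as [q Hq].
  exists q. rewrite <- Hq. apply nsum_ext. intros l Hl.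
  unfold DeltaGamma_eig. now destruct (div_mod_pair (2 * m) k l Hl) as [-> ->].
Qed.

Lemma nsum_below_Delta_eig_0_odd m z : (1 <= m)%nat -> -2 < z < 2 ->
  Nat.Odd (nsum (2 * m) (fun k => Nat.b2n (below z (Delta_eig (2 * m) 0 k)))).
Proof.
  intros Hm Hz.
  destruct (nsum_reflect_fixed m (fun k => Nat.b2n (below z (Delta_eig (2 * m) 0 k))))
    as [q Hq]; auto.
  - intros l Hl. now rewrite Delta_eig_0_reflect by lia.
  - exists q. rewrite Hq, Delta_eig_0_0, Delta_eig_0_half by lia. unfold below.
    destruct (Rlt_dec 2 z), (Rlt_dec (-2) z); simpl; lia || (exfalso; lra).
Qed.

Lemma nsum_below_Delta_eig_PI_even m z :
  Nat.Even (nsum (2 * m) (fun k => Nat.b2n (below z (Delta_eig (2 * m) PI k)))).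
Proof. apply nsum_reflect_even. intros k Hk. now rewrite Delta_eig_PI_reflect. Qed.

Lemma nsum_below_Delta_eig_gt_2 m t z : 2 < z ->
  nsum (2 * m) (fun k => Nat.b2n (below z (Delta_eig (2 * m) t k))) = (2 * m)%nat.
Proof.
  intros Hz. rewrite (nsum_const _ _ 1); [lia|]. intros k _. unfold below.
  destruct Rlt_dec; auto. pose proof (Delta_eig_bound (2 * m) t k). lra.
Qed.

Lemma nsum_below_Delta_eig_lt_m2 m t z : z < -2 ->
  nsum (2 * m) (fun k => Nat.b2n (below z (Delta_eig (2 * m) t k))) = O.
Proof.
  intros Hz. rewrite (nsum_const _ _ 0); [lia|]. intros k _. unfold below.
  destruct Rlt_dec; auto. pose proof (Delta_eig_bound (2 * m) t k). lra.
Qed.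

Lemma corner_count_parity m E : (1 <= m)%nat -> -4 < E < 4 -> E <> 0 ->
  Nat.Odd (count (below E) (spec_list (2 * m) 0 0)) /\
  Nat.Even (count (below E) (spec_list (2 * m) PI 0)).
Proof.
  intros Hm HE HE0.
  destruct (count_below_spec_list_mod2 m 0 E Hm) as [q0 ->].
  destruct (count_below_spec_list_mod2 m PI E Hm) as [qP ->].
  destruct (Rlt_dec 0 E).
  - rewrite !(nsum_below_Delta_eig_gt_2 m _ (E + 2)) by lra.
    destruct (nsum_below_Delta_eig_0_odd m (E - 2)) as [a ->]; [lia | lra|].
    destruct (nsum_below_Delta_eig_PI_even m (E - 2)) as [b ->].
    split; [exists (a + m + q0)%nat | exists (b + m + qP)%nat]; lia.
  - rewrite !(nsum_below_Delta_eig_lt_m2 m _ (E - 2)) by lra.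
    destruct (nsum_below_Delta_eig_0_odd m (E + 2)) as [a ->]; [lia | lra|].
    destruct (nsum_below_Delta_eig_PI_even m (E + 2)) as [b ->].
    split; [exists (a + q0)%nat | exists (b + qP)%nat]; lia.
Qed.

Lemma in_Cr_of_reflection r n x : (0 < r)%nat -> (n <= 2 * r)%nat ->
  x = 2 * cos (PI * INR n / INR r) -> in_Cr r x.
Proof.
  intros Hr Hn ->. destruct (Nat.le_gt_cases n r); [now exists n|].
  exists (2 * r - n)%nat. split; [lia|].
  assert (0 < INR r) by (apply lt_0_INR; lia).
  rewrite minus_INR, mult_INR, <- cos_2PI_minus by lia. simpl INR. do 2 f_equal. field. lra.
Qed.

Lemma Delta_eig_0_in_Cr r k : (k < r)%nat -> in_Cr r (Delta_eig r 0 k).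
Proof.
  intros Hk. apply (in_Cr_of_reflection r (2 * k)); [lia | lia|].
  unfold Delta_eig, phase. rewrite mult_INR. simpl INR. do 2 f_equal. field.
  apply not_0_INR. lia.
Qed.

Lemma Delta_eig_PI_in_Cr r k : (k < r)%nat -> in_Cr r (Delta_eig r PI k).
Proof.
  intros Hk. apply (in_Cr_of_reflection r (2 * k + 1)); [lia | lia|].
  unfold Delta_eig, phase. rewrite plus_INR, mult_INR. simpl INR. do 2 f_equal. field.
  apply not_0_INR. lia.
Qed.

Lemma corner_eig_in_CGamma r th i : th = 0 \/ th = PI -> (i < r * r)%nat ->
  in_CGamma r (DeltaGamma_eig r th 0 i).
Proof.
  intros Hth Hi. assert (Hr : (0 < r)%nat) by lia.
  exists (Delta_eig r th (i / r)), (Delta_eig r 0 (i mod r)). repeat split.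
  - assert (Hk : (i / r < r)%nat) by (apply Nat.Div0.div_lt_upper_bound; lia).
    destruct Hth as [-> | ->]; [apply Delta_eig_0_in_Cr | apply Delta_eig_PI_in_Cr]; auto.
  - apply Delta_eig_0_in_Cr, Nat.mod_upper_bound. lia.
Qed.

Lemma band_interior_of_corner_counts r E : (2 <= r)%nat ->
  (forall i, (i < r * r)%nat -> DeltaGamma_eig r 0 0 i <> E /\ DeltaGamma_eig r PI 0 i <> E) ->
  count (below E) (spec_list r 0 0) <> count (below E) (spec_list r PI 0) ->
  in_interior (band r (Nat.min (count (below E) (spec_list r 0 0))
                               (count (below E) (spec_list r PI 0)))) E.
Proof.
  intros Hr Hcorner Hneq.
  assert (Hnot : forall th, th = 0 \/ th = PI -> forall x, In x (spec_list r th 0) -> x <> E).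
  { intros th Hth x Hx. unfold spec_list in Hx. apply in_map_iff in Hx as [i [<- Hi]].
    apply in_seq in Hi. destruct Hth as [-> | ->]; apply Hcorner; lia. }
  destruct (count_locally_constant _ E (Hnot 0 ltac:(auto))) as [e0 [He0 H0]].
  destruct (count_locally_constant _ E (Hnot PI ltac:(auto))) as [eP [HeP HP]].
  exists (Rmin e0 eP). split; [now apply Rmin_glb_lt|]. intros y Hy.
  destruct (H0 y) as [B0 A0]; [eapply Rlt_le_trans; [exact Hy | apply Rmin_l]|].
  destruct (HP y) as [BP AP]; [eapply Rlt_le_trans; [exact Hy | apply Rmin_r]|].
  destruct (count_crossing (fun t => DeltaGamma_eig r t 0) (seq 0 (r * r)) y
              (Nat.min (count (below E) (spec_list r 0 0)) (count (below E) (spec_list r PI 0)))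
              0 PI) as [t [Ht Hc]].
  - intros i. unfold DeltaGamma_eig, Delta_eig, phase. reg.
  - pose proof PI_RGT_0. lra.
  - unfold spec_list in *. lia.
  - apply (band_of_counts r _ t 0); auto; pose proof PI_RGT_0; lra.
Qed.

Theorem proposition3p2 :
  forall (r : nat), (0 < r)%nat -> Nat.Even r ->
  forall E : R, -4 < E < 4 -> ~ in_CGamma r E ->
  exists j : nat, (j < r * r)%nat /\ in_interior (band r j) E.
Proof.
  intros r Hr [m ->] E HE HnC.
  assert (Hcorner : forall th i, th = 0 \/ th = PI -> (i < 2 * m * (2 * m))%nat ->
                      DeltaGamma_eig (2 * m) th 0 i <> E).
  { intros th i Hth Hi <-. now apply HnC, corner_eig_in_CGamma. }
  assert (HE0 : E <> 0).
  { intros ->. apply (Hcorner 0 m); [auto | nia |].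
    unfold DeltaGamma_eig. rewrite Nat.div_small, Nat.mod_small by lia.
    rewrite Delta_eig_0_0, Delta_eig_0_half by lia. ring. }
  set (N0 := count (below E) (spec_list (2 * m) 0 0)).
  set (Npi := count (below E) (spec_list (2 * m) PI 0)).
  destruct (corner_count_parity m E ltac:(lia) HE HE0) as [Hodd Heven]. fold N0 Npi in Hodd, Heven.
  assert (Hneq : N0 <> Npi).
  { intros Heq. rewrite Heq in Hodd. exact (Nat.Even_Odd_False _ Heven Hodd). }
  exists (Nat.min N0 Npi). split.
  - pose proof (count_spec_list_le (2 * m) 0 0 (below E)).
    pose proof (count_spec_list_le (2 * m) PI 0 (below E)). lia.
  - apply band_interior_of_corner_counts; auto; lia.
Qed.
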